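(* Let $\mathcal{C}$ be a polyhedral complex in $\mathbb{R}^n$ all of whose cells are pointed. Then: (a) if $P_1,P_2\in\mathcal{C}$ and $p\in P_1\cap P_2$, then $\mathrm{base}_{P_1}(p)=\mathrm{base}_{P_2}(p)$, so $\mathrm{base}_{\mathcal{C}}:|\mathcal{C}|\to|\mathrm{com.part}(\mathcal{C})|$, $\mathrm{base}_{\mathcal{C}}(p)=\mathrm{base}_P(p)$ for any cell $P\ni p$, is well defined; (b) $\mathrm{base}_{\mathcal{C}}$ is continuous; and (c) $\Phi(p,t)=t\,\mathrm{base}_{\mathcal{C}}(p)+(1-t)p$ is a strong deformation retraction of $|\mathcal{C}|$ onto $|\mathrm{com.part}(\mathcal{C})|$.
   Context: A polyhedral complex is a finite set of polyhedral sets (cells) closed under taking faces in which any two cells intersect in a common face; $|\mathcal{C}|$ is the union of cells. For a polyhedral set $P$, $\mathrm{char.cone}(P)=\{y:x+y\in P\ \forall x\in P\}$; $P$ is pointed if $\mathrm{char.cone}(P)\cap-\mathrm{char.cone}(P)=\{0\}$. $K_P$ is the convex hull of the vertices of $P$, $\widetilde K_P$ the set of all faces of $K_P$, and $\mathrm{com.part}(\mathcal{C})=\bigcup_{C\in\mathcal{C}}\widetilde K_C$, with $|\mathrm{com.part}(\mathcal{C})|=\bigcup_C K_C$. For $p\in P$, $\mathrm{base}_P(p)$ is the unique point $x\in K_P$ with $p-x\in\mathrm{char.cone}(P)$ minimizing $|p-x|$. A strong deformation retraction of $X$ onto $A$ is a continuous $H:X\times[0,1]\to X$ with $H(x,0)=x$,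 $H(x,1)\in A$, $H(a,t)=a$ for $a\in A$. *)

From HB Require Import structures.
From mathcomp Require Import all_boot all_order all_algebra.
From mathcomp Require Import all_classical all_reals all_analysis.
Set Implicit Arguments. Unset Strict Implicit. Unset Printing Implicit Defensive.
Import Order.TTheory GRing.Theory Num.Theory.
Import numFieldNormedType.Exports.
Local Open Scope classical_set_scope.
Local Open Scope ring_scope.

Section PolyDefs.
Variables (R : realType) (n : nat).
Local Notation V := ('rV[R]_n).

Definition dotp (u v : V) : R := \sum_(i < n) u ord0 i * v ord0 i.
Definition enorm (u : V) : R := Num.sqrt (dotp u u).

Definition polyhedral (P : set V) : Prop :=
  exists (m : nat) (a : 'I_m -> V) (b : 'I_m -> R),
    P = [set x | forall i, dotp (a i) x <= b i].

(* F is a face of P: intersection of P with a supporting hyperplane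
   (c = 0, d = 0 gives P itself, c = 0, d = 1 gives the empty face) *)
Definition face (P F : set V) : Prop :=
  exists (c : V) (d : R), (forall x, P x -> dotp c x <= d) /\
    F = P `&` [set x | dotp c x = d].

Definition polyhedral_complex (C : set (set V)) : Prop :=
  [/\ finite_set C,
      (forall P, C P -> polyhedral P),
      (forall P F, C P -> face P F -> C F) &
      (forall P Q, C P -> C Q -> face P (P `&` Q) /\ face Q (P `&` Q))].

Definition cplx_support (C : set (set V)) : set V := [set x | exists2 P, C P & P x].

Definition char_cone (P : set V) : set V := [set y | forall x, P x -> P (x + y)].

Definition pointed (P : set V) : Prop :=
  char_cone P `&` [set - y | y in char_cone P] = [set 0].

Definition vertex (P : set V) (v : V) : Prop := face P [set v].

Definition conv_hull (S : set V) : set V :=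
  [set x | exists (k : nat) (l : 'I_k -> R) (v : 'I_k -> V),
     [/\ forall i, 0 <= l i, \sum_(i < k) l i = 1, forall i, S (v i) &
         x = \sum_(i < k) l i *: v i]].

Definition KP (P : set V) : set V := conv_hull (vertex P).

Definition com_part (C : set (set V)) : set (set V) :=
  [set F | exists2 P, C P & face (KP P) F].

Definition is_base (P : set V) (p x : V) : Prop :=
  [/\ KP P x, char_cone P (p - x) &
      forall y, KP P y -> char_cone P (p - y) -> enorm (p - x) <= enorm (p - y)].

(* base_P(p): the (unique, see theorem) base point *)
Definition base (P : set V) (p : V) : V := xget 0 (is_base P p).

Definition baseC (C : set (set V)) (p : V) : V :=
  xget 0 [set x | exists P, C P /\ P p /\ x = base P p].

End PolyDefs.

Definition strong_deformation_retraction (R : realType) (T : topologicalType)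
  (X A : set T) (H : T * R -> T) : Prop :=
  A `<=` X /\
  [/\ (forall x t, X x -> (0 <= t <= 1)%R -> X (H (x, t))),
      {within X `*` `[0%R, 1%R], continuous H},
      (forall x, X x -> H (x, 0%R) = x),
      (forall x, X x -> A (H (x, 1%R))) &
      (forall a t, A a -> (0 <= t <= 1)%R -> H (a, t) = a)].

From HB Require Import structures.
From mathcomp Require Import all_boot all_order all_algebra.
From mathcomp Require Import all_classical all_reals all_analysis finmap.
From mathcomp Require Import ring lra.
Import Order.TTheory GRing.Theory Num.Theory.
Import numFieldNormedType.Exports.
Local Open Scope classical_set_scope.
Local Open Scope ring_scope.
Set Implicit Arguments. Unset Strict Implicit. Unset Printing Implicit Defensive.

(* Every point p of a pointed polyhedron P = {x | a_i . x <= b_i} splits as p = x + y with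
   x in K_P and y in the recession cone: move p along a line inside P until a new
   constraint becomes tight, and induct on the number of slack constraints.  Hence the
   points x of K_P with p - x in char.cone(P) form a nonempty compact convex set, and
   base_P(p), its Euclidean nearest point to p, exists and is unique.  If p lies in a face
   F of P, the supporting hyperplane of F forces base_P(p) into K_F, where it is also the
   nearest feasible point for F; this gives (a).
   Continuity of base_P uses compactness of K_P: writing a point p near p0 as a convex
   combination of p0 and a point of P at a fixed distance gives
   |p - base_P p| <= |p0 - base_P p0| + C |p - p0|, so every cluster point of base_P at
   p0 is feasible for p0 and at least as close as base_P(p0), hence equal to it.  Gluing
   over the finitely many closed cells gives (b), and (c) follows because base_C is the
   identity on |com.part(C)|. *)

Section Euclidean.
Variables (R : realType) (n : nat).
Local Notation V := ('rV[R]_n).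
Implicit Types u v w : V.

Lemma dotpC u v : dotp u v = dotp v u.
Proof. by apply: eq_bigr => i _; rewrite mulrC. Qed.

Lemma dotpDr u v w : dotp u (v + w) = dotp u v + dotp u w.
Proof. by rewrite /dotp -big_split; apply: eq_bigr => i _; rewrite mxE mulrDr. Qed.

Lemma dotpZr u (k : R) v : dotp u (k *: v) = k * dotp u v.
Proof. by rewrite /dotp mulr_sumr; apply: eq_bigr => i _; rewrite mxE mulrCA. Qed.

Lemma dotpNr u v : dotp u (- v) = - dotp u v.
Proof. by rewrite -scaleN1r dotpZr mulN1r. Qed.

Lemma dotpBr u v w : dotp u (v - w) = dotp u v - dotp u w.
Proof. by rewrite dotpDr dotpNr. Qed.

Lemma dotp0r u : dotp u 0 = 0.
Proof. by rewrite -(scale0r (0 : V)) dotpZr mul0r. Qed.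

Lemma dotpDl u v w : dotp (v + w) u = dotp v u + dotp w u.
Proof. by rewrite dotpC dotpDr !(dotpC u). Qed.

Lemma dotpZl u (k : R) v : dotp (k *: v) u = k * dotp v u.
Proof. by rewrite dotpC dotpZr dotpC. Qed.

Lemma dotpNl u v : dotp (- v) u = - dotp v u.
Proof. by rewrite dotpC dotpNr dotpC. Qed.

Lemma dotpBl u v w : dotp (v - w) u = dotp v u - dotp w u.
Proof. by rewrite dotpDl dotpNl. Qed.

Lemma dotp0l u : dotp 0 u = 0.
Proof. by rewrite dotpC dotp0r. Qed.

Lemma dotp_sumr I (r : seq I) (P : pred I) (F : I -> V) u :
  dotp u (\sum_(i <- r | P i) F i) = \sum_(i <- r | P i) dotp u (F i).
Proof.
elim/big_rec2: _; first by rewrite dotp0r.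
by move=> i y1 y2 _ <-; rewrite dotpDr.
Qed.

Lemma dotpp_ge0 u : 0 <= dotp u u.
Proof. by apply: sumr_ge0 => i _; rewrite -expr2 sqr_ge0. Qed.

Lemma dotpp_eq0 u : dotp u u = 0 -> u = 0.
Proof.
move=> /eqP; rewrite psumr_eq0; last by move=> i _; rewrite -expr2 sqr_ge0.
move=> /allP u0; apply/rowP => j; rewrite mxE.
by have := u0 j (mem_index_enum j); rewrite /= mulf_eq0 orbb => /eqP.
Qed.

Lemma enorm_ge0 u : 0 <= enorm u.
Proof. exact: sqrtr_ge0. Qed.

Lemma enorm_sqr u : enorm u ^+ 2 = dotp u u.
Proof. by rewrite sqr_sqrtr // dotpp_ge0. Qed.

Lemma enorm0 : enorm (0 : V) = 0.
Proof. by rewrite /enorm dotp0r sqrtr0. Qed.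

Lemma enorm_eq0 u : enorm u = 0 -> u = 0.
Proof. by move=> u0; apply: dotpp_eq0; rewrite -enorm_sqr u0 expr0n. Qed.

Lemma enormN u : enorm (- u) = enorm u.
Proof. by rewrite /enorm dotpNl dotpNr opprK. Qed.

Lemma enorm_distC u v : enorm (u - v) = enorm (v - u).
Proof. by rewrite -enormN opprB. Qed.

Lemma enormZ (k : R) u : enorm (k *: u) = `|k| * enorm u.
Proof.
by rewrite /enorm dotpZl dotpZr mulrA -expr2 sqrtrM ?sqr_ge0 // sqrtr_sqr.
Qed.

Lemma cauchy_schwarz u v : dotp u v ^+ 2 <= dotp u u * dotp v v.
Proof.
have [->|vn0] := eqVneq v 0; first by rewrite !dotp0r expr0n mulr0.
have vv_gt0 : 0 < dotp v v.
  by rewrite lt_def dotpp_ge0 andbT; apply: contra_neq vn0 => /dotpp_eq0.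
have := dotpp_ge0 (u - (dotp u v / dotp v v) *: v).
rewrite dotpBl !dotpBr !dotpZl !dotpZr (dotpC v u) => ge0.
have : 0 <= (dotp u u * dotp v v - dotp u v ^+ 2) / dotp v v.
  by apply: (le_trans ge0); rewrite le_eqVlt; apply/orP; left; apply/eqP; field;
    rewrite gt_eqF.
by rewrite pmulr_lge0 ?invr_gt0 // subr_ge0.
Qed.

Lemma ler_norm_dotp u v : `|dotp u v| <= enorm u * enorm v.
Proof.
rewrite -(ger0_norm (mulr_ge0 (enorm_ge0 u) (enorm_ge0 v))).
rewrite -ler_sqr ?normr_ge0 // !real_normK ?num_real // exprMn !enorm_sqr.
exact: cauchy_schwarz.
Qed.

Lemma ler_dotp u v : dotp u v <= enorm u * enorm v.
Proof. exact: le_trans (ler_norm _) (ler_norm_dotp u v). Qed.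

Lemma ler_enormD u v : enorm (u + v) <= enorm u + enorm v.
Proof.
rewrite -(ler_pXn2r (_ : 0 < 2)%N) ?nnegrE ?addr_ge0 ?enorm_ge0 //.
rewrite enorm_sqr dotpDl !dotpDr (dotpC v u) sqrrD !enorm_sqr.
have := ler_dotp u v; lra.
Qed.

Lemma ler_enorm_distD u v w : enorm (u - w) <= enorm (u - v) + enorm (v - w).
Proof. by have := ler_enormD (u - v) (v - w); rewrite addrA addrNK. Qed.

Lemma ler_enorm_sum I (r : seq I) (F : I -> V) :
  enorm (\sum_(i <- r) F i) <= \sum_(i <- r) enorm (F i).
Proof.
elim/big_ind2: _ => //; first by rewrite enorm0.
by move=> x1 x2 y1 y2 h1 h2; apply: (le_trans (ler_enormD _ _)); apply: lerD.
Qed.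

Lemma ler_enorm_dist u v : `|enorm u - enorm v| <= enorm (u - v).
Proof.
rewrite ler_norml; apply/andP; split.
  by have := ler_enormD (v - u) u; rewrite subrK enorm_distC; lra.
by have := ler_enormD (u - v) v; rewrite subrK; lra.
Qed.

Lemma ler_coord_normr u i : `|u ord0 i| <= `|u|.
Proof.
rewrite [leRHS]/Num.Def.normr /= mx_normrE.
by apply/bigmax_geP; right; exists (ord0, i).
Qed.

Lemma enorm_le_normr u : enorm u <= (n%:R + 1) * `|u|.
Proof.
have h0 : 0 <= (n%:R + 1) * `|u| by apply: mulr_ge0 => //; rewrite addr_ge0.
rewrite -(ger0_norm h0) -sqrtr_sqr ler_sqrt ?sqr_ge0 //.
apply: (le_trans (y := \sum_(i < n) `|u| ^+ 2)).
  apply: ler_sum => i _; rewrite -expr2 -real_normK ?num_real //.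
  by rewrite lerXn2r ?nnegrE ?normr_ge0 ?ler_coord_normr.
rewrite sumr_const card_ord exprMn -[_ *+ n]mulr_natl ler_wpM2r ?sqr_ge0 //.
have : (n%:R : R) <= n%:R + 1 by rewrite lerDl.
have := ler0n R n; nra.
Qed.

End Euclidean.

Lemma lipschitz_continuous (R : realType) (U W : normedModType R) (f : U -> W)
    (K : R) :
  (forall x y, `|f x - f y| <= K * `|x - y|) -> continuous f.
Proof.
move=> fK x; apply/cvgrPdist_lt => e e0.
have K1 : 0 < `|K| + 1 by rewrite ltr_pwDr.
have near_x : \forall y \near x, `|x - y| < e / (`|K| + 1).
  exact: (@cvgrPdist_lt _ _ _ (nbhs x) _ id x).1 cvg_id _ (divr_gt0 e0 K1).
apply: filterS near_x => y; rewrite ltr_pdivlMr // => xy.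
apply: (le_lt_trans (fK x y)); apply: (le_lt_trans (y := `|K| * `|x - y|)).
  by apply: ler_wpM2r; [exact: normr_ge0 | exact: ler_norm].
have := normr_ge0 (x - y); have := normr_ge0 K; nra.
Qed.

Section EuclideanTopology.
Variables (R : realType) (n : nat).
Local Notation V := ('rV[R]_n).

Lemma dotp_continuous (c : V) : continuous (dotp c).
Proof.
apply: (@lipschitz_continuous _ V R^o _ (enorm c * (n%:R + 1))) => x y.
rewrite -dotpBr; apply: (le_trans (ler_norm_dotp _ _)).
by rewrite -mulrA ler_wpM2l ?enorm_ge0 // enorm_le_normr.
Qed.

Lemma enorm_dist_continuous (p : V) : continuous (fun x : V => enorm (p - x) : R^o).
Proof.
apply: (@lipschitz_continuous _ V R^o _ (n%:R + 1)) => x y.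
apply: (le_trans (ler_enorm_dist _ _)).
by rewrite opprB addrC addrA addrNK enorm_distC enorm_le_normr.
Qed.

Lemma near_within_enorm_le (A : set V) (p0 : V) (d : R) : 0 < d ->
  \forall p \near within A (nbhs p0), A p /\ enorm (p - p0) <= d.
Proof.
move=> d0; have n1 : 0 < n%:R + 1 :> R by rewrite ltr_pwDr.
have : \forall p \near p0, `|p0 - p| < d / (n%:R + 1).
  exact: (@cvgrPdist_lt _ _ _ (nbhs p0) _ id p0).1 cvg_id _ (divr_gt0 d0 n1).
apply: filterS => p; rewrite ltr_pdivlMr // => dp Ap; split => //.
by rewrite enorm_distC; apply: (le_trans (enorm_le_normr _)); rewrite mulrC ltW.
Qed.

Lemma closed_halfspace (c : V) (d : R) : closed [set x | dotp c x <= d].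
Proof.
exact: (continuous_closedP (dotp c)).1 (@dotp_continuous c) _ (@closed_le R d).
Qed.

End EuclideanTopology.

Section Hull.
Variables (R : realType) (n : nat).
Local Notation V := ('rV[R]_n).

Definition hull N (w : 'I_N -> V) : set V :=
  [set x | exists l : 'I_N -> R,
     [/\ forall i, 0 <= l i, \sum_i l i = 1 & x = \sum_i l i *: w i]].

Lemma hull_convex N (w : 'I_N -> V) x y t : hull w x -> hull w y -> 0 <= t <= 1 ->
  hull w (t *: x + (1 - t) *: y).
Proof.
move=> [l [l0 l1 ->]] [l' [l0' l1' ->]] /andP[t0 t1].
exists (fun i => t * l i + (1 - t) * l' i); split.
- by move=> i; apply: addr_ge0; apply: mulr_ge0 => //; rewrite subr_ge0.
- by rewrite big_split /= -!mulr_sumr l1 l1'; ring.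
- rewrite !scaler_sumr -big_split /=; apply: eq_bigr => i _.
  by rewrite [RHS]scalerDl !scalerA.
Qed.

Lemma hull_enorm_le N (w : 'I_N -> V) x : hull w x -> enorm x <= \sum_i enorm (w i).
Proof.
move=> [l [l0 l1 ->]]; apply: (le_trans (ler_enorm_sum _ _)); apply: ler_sum => i _.
rewrite enormZ ger0_norm // ler_piMl ?enorm_ge0 //.
by rewrite -l1 (bigD1 i) //= lerDl; exact: sumr_ge0.
Qed.

Definition std_simplex N : set 'rV[R]_N :=
  [set l | (forall i, 0 <= l ord0 i) /\ \sum_i l ord0 i = 1].

Lemma compact_std_simplex (N : nat) : compact (@std_simplex N).
Proof.
apply: bounded_closed_compact.
  rewrite /= /bounded_near; near=> M => l [l0 l1] /=.
  apply: (le_trans (y := 1)); last by near: M; apply: nbhs_pinfty_ge; rewrite num_real.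
  rewrite [leLHS]/Num.Def.normr /= mx_normrE; apply/bigmax_leP; split => // -[i j] _ /=.
  by rewrite (ord1 i) ger0_norm // -l1 (bigD1 j) //= lerDl; exact: sumr_ge0.
have sum_cont : continuous (fun l : 'rV[R]_N => \sum_i l ord0 i : R^o).
  apply: (@lipschitz_continuous R _ R^o _ N%:R) => x y.
  rewrite -sumrB; apply: (le_trans (ler_norm_sum _ _ _)).
  apply: (le_trans (y := \sum_(i < N) `|x - y|)); last first.
    by rewrite sumr_const card_ord mulr_natl.
  apply: ler_sum => i _; rewrite (_ : _ - _ = (x - y) ord0 i) ?ler_coord_normr //.
  by rewrite !mxE.
rewrite [X in closed X](_ : _ = (\bigcap_i [set l : 'rV[R]_N | 0 <= l ord0 i]) `&`
   ((fun l => \sum_i l ord0 i : R^o) @^-1` [set 1])); last first.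
  by apply/seteqP; split=> l [l0 l1]; split=> // i; [move=> _ | ]; apply: l0.
apply: closedI.
  apply: closed_bigI => i _.
  exact: (continuous_closedP _).1 (@coord_continuous R 1 N ord0 i) _ (@closed_ge R 0).
exact: (continuous_closedP _).1 sum_cont _ (@closed_eq R^o 1).
Unshelve. all: end_near.
Qed.

Lemma hull_compact N (w : 'I_N -> V) : compact (hull w).
Proof.
pose comb (l : 'rV[R]_N) := \sum_i l ord0 i *: w i.
rewrite [hull w](_ : _ = comb @` @std_simplex N).
  apply: continuous_compact; last exact: compact_std_simplex.
  apply: continuous_subspaceT.
  apply: (@lipschitz_continuous R _ _ comb (\sum_i `|w i|)) => x y.
  rewrite /comb -sumrB mulr_suml; apply: (le_trans (ler_norm_sum _ _ _)).
  apply: ler_sum => i _; rewrite -scalerBl normrZ [leRHS]mulrC ler_wpM2r //.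
  by rewrite (_ : _ - _ = (x - y) ord0 i) ?ler_coord_normr // !mxE.

apply/seteqP; split => x.
  move=> [l [l0 l1 ->]]; exists (\row_i l i); last first.
    by rewrite /comb; apply: eq_bigr => i _; rewrite mxE.
  by split; [move=> i; rewrite mxE | under eq_bigr do rewrite mxE].
by move=> [l [l0 l1] <-]; exists (fun i => l ord0 i).
Qed.

Lemma conv_hull_fsetE (X : {fset V}) :
  conv_hull [set` X] = hull (fun i : 'I_(size X) => nth 0 (X : seq V) i).
Proof.
apply/seteqP; split => x.
  move=> [k [l [v [l0 l1 vX ->]]]].
  have idx j : (index (v j) X < size X)%N by rewrite index_mem; exact: vX.
  pose f j := Ordinal (idx j).
  exists (fun i => \sum_(j | f j == i) l j); split.
  - by move=> i; apply: sumr_ge0.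
  - by rewrite -l1 (partition_big f xpredT).
  - rewrite (partition_big f xpredT) //=; apply: eq_bigr => i _.
    rewrite scaler_suml; apply: eq_bigr => j /eqP <-.
    by rewrite nth_index //; exact: vX.
move=> [l [l0 l1 ->]]; exists (size X), l, (fun i : 'I_(size X) => nth 0 (X : seq V) i).
by split => // i; rewrite /= mem_nth.
Qed.

End Hull.

Lemma pos_lbound_fin (R : realType) (I : finType) (Q : pred I) (f : I -> R) :
  (forall i, Q i -> 0 < f i) -> exists2 s : R, 0 < s & forall i, Q i -> s <= f i.
Proof.
move=> f_gt0.
have : \forall s \near 0^'+, 0 < s /\ forall i, Q i -> s <= f i.
  near=> s; split; first by near: s; exact: nbhs_right_gt.
  near: s; apply: filter_forall => i.
  case Qi: (Q i); last exact: nearW.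
  by apply: filterS (nbhs_right_le (f_gt0 i Qi)) => s.
by move=> /filter_ex [s [s0 fs]]; exists s.
Unshelve. all: end_near.
Qed.

Lemma ler_addgt0_mulr (R : realFieldType) (u v k : R) : 0 <= k ->
  (forall d, 0 < d -> u <= v + k * d) -> u <= v.
Proof.
move=> k0 uv; apply/ler_addgt0Pr => e e0.
have k1 : 0 < k + 1 by rewrite ltr_pwDr.
apply: (le_trans (uv _ (divr_gt0 e0 k1))).
rewrite lerD2l (_ : k * (e / (k + 1)) = e - e / (k + 1)); last by field; rewrite gt_eqF.
by rewrite gerBl divr_ge0 // ltW.
Qed.

Section Faces.
Variables (R : realType) (n : nat).
Local Notation V := ('rV[R]_n).
Implicit Types (P : set V) (c v x y z : V).

Definition extreme P v := P v /\ forall y, P (v + y) -> P (v - y) -> y = 0.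

Lemma vertex_extreme P v : vertex P v -> extreme P v.
Proof.
move=> [c [d [Pcd Pv_eq]]].
have [Pv cv] : P v /\ dotp c v = d by have : [set v] v by []; rewrite Pv_eq; case.
split=> // y Pvy Pvy'.
have := Pcd _ Pvy; have := Pcd _ Pvy'; rewrite dotpBr dotpDr => h1 h2.
have cy : dotp c y = 0 by apply/eqP; rewrite eq_le; apply/andP; split; lra.
have : (P `&` [set x | dotp c x = d]) (v + y) by split => //=; rewrite dotpDr cy addr0.
by rewrite -Pv_eq /= => vy; rewrite -(addKr v y) vy addNr.
Qed.

Lemma char_cone_supp P c d y z : (forall x, P x -> dotp c x <= d) -> P z ->
  char_cone P y -> dotp c y <= 0.
Proof.
move=> Pcd Pz Py; rewrite leNgt; apply/negP => cy_gt0.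
have Pz_ray (k : nat) : P (z + k%:R *: y).
  elim: k => [|k IH]; first by rewrite scale0r addr0.
  by rewrite -[k.+1]addn1 natrD scalerDl scale1r addrA; apply: Py.
set k := Num.Def.archi_bound (`|d - dotp c z| / dotp c y).
have : `|d - dotp c z| / dotp c y < k%:R by apply: archi_boundP; rewrite divr_ge0 // ltW.
rewrite ltr_pdivrMr // => hk.
have := Pcd _ (Pz_ray k); rewrite dotpDr dotpZr.
by have := ler_norm (d - dotp c z); lra.
Qed.

Lemma conv_hull_mono (S T : set V) : S `<=` T -> conv_hull S `<=` conv_hull T.
Proof.
by move=> ST x [k [l [v [l0 l1 vS ->]]]]; exists k, l, v; split => // i; apply: ST.
Qed.

End Faces.

Section HPolyhedron.
Variables (R : realType) (n m : nat) (a : 'I_m -> 'rV[R]_n) (b : 'I_m -> R).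
Local Notation V := ('rV[R]_n).
Implicit Types (p v w x y z : V).

Definition hpoly : set V := [set x | forall i, dotp (a i) x <= b i].
Definition hcone : set V := [set y | forall i, dotp (a i) y <= 0].
Definition slack v : {set 'I_m} := [set i | dotp (a i) v != b i].
Definition tangent v y := forall i, dotp (a i) v = b i -> dotp (a i) y = 0.

Lemma tangentN v y : tangent v y -> tangent v (- y).
Proof. by move=> vy i /vy; rewrite dotpNr => ->; rewrite oppr0. Qed.

Lemma hpoly_polyhedral : polyhedral hpoly.
Proof. by exists m, a, b. Qed.

Lemma hpoly_closed : closed hpoly.
Proof.
rewrite [hpoly](_ : _ = \bigcap_i [set x | dotp (a i) x <= b i]).
  by apply: closed_bigI => i _; exact: closed_halfspace.
by apply/seteqP; split => x /= Px i; [move=> _ | ]; apply: Px.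
Qed.

Lemma hpoly_convex x y t : hpoly x -> hpoly y -> 0 <= t <= 1 ->
  hpoly (t *: x + (1 - t) *: y).
Proof.
move=> Px Py /andP[t0 t1] i; rewrite dotpDr !dotpZr.
rewrite [b i](_ : _ = t * b i + (1 - t) * b i); last by ring.
by apply: lerD; apply: ler_wpM2l => //; rewrite subr_ge0.
Qed.

Lemma hconeD y z : hcone y -> hcone z -> hcone (y + z).
Proof. by move=> Cy Cz i; rewrite dotpDr; have := Cy i; have := Cz i; lra. Qed.

Lemma hconeZ y t : 0 <= t -> hcone y -> hcone (t *: y).
Proof. by move=> t0 Cy i; rewrite dotpZr; have := Cy i; nra. Qed.

Lemma hcone_char_cone y : hcone y -> char_cone hpoly y.
Proof. by move=> Cy x Px i; rewrite dotpDr; have := Px i; have := Cy i; lra. Qed.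

Lemma char_cone_hcone z y : hpoly z -> char_cone hpoly y -> hcone y.
Proof. by move=> Pz Py i; apply: (char_cone_supp (d := b i)) Pz Py => x; apply. Qed.

Lemma tangent_perturb v y : hpoly v -> tangent v y ->
  exists2 e : R, 0 < e & hpoly (v + e *: y) /\ hpoly (v - e *: y).
Proof.
move=> Pv vy.
have slack_gt0 i : dotp (a i) v != b i ->
    0 < (b i - dotp (a i) v) / (`|dotp (a i) y| + 1).
  move=> vi; apply: divr_gt0; last by rewrite ltr_pwDr.
  by rewrite subr_gt0 lt_neqAle vi Pv.
have [e e0 le_e] := pos_lbound_fin slack_gt0.
exists e => //; split=> i; rewrite ?dotpBr ?dotpDr dotpZr.
all: have [vi|vi] := eqVneq (dotp (a i) v) (b i);
  first by rewrite vy // mulr0 ?addr0 ?subr0 vi.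
all: have := le_e i vi; rewrite ler_pdivlMr ?ltr_pwDr //.
all: have := ler_norm (dotp (a i) y); have := ler_norm (- dotp (a i) y).
all: by rewrite normrN; nra.
Qed.

Lemma extreme_hpoly_vertex v : extreme hpoly v -> vertex hpoly v.
Proof.
move=> [Pv v_ext].
pose Q i := dotp (a i) v == b i.
exists (\sum_(i | Q i) a i), (\sum_(i | Q i) b i); split.
  move=> x Px; rewrite dotpC dotp_sumr; apply: ler_sum => i _.
  by rewrite dotpC; apply: Px.
apply/seteqP; split => x /=.
  move=> ->; split => //; rewrite dotpC dotp_sumr; apply: eq_bigr => i /eqP.
  by rewrite dotpC.
move=> [Px]; rewrite dotpC dotp_sumr => /eqP; rewrite eq_sym -subr_eq0 -sumrB.
move=> /eqP /psumr_eq0P x_active.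
have x_act i : Q i -> dotp (a i) x = b i.
  move=> Qi; apply/eqP; rewrite eq_sym -subr_eq0 dotpC x_active // => j _.
  by rewrite subr_ge0 dotpC; apply: Px.
have tx : tangent v (x - v).
  by move=> i vi; rewrite dotpBr vi x_act ?subrr //; apply/eqP.
have [e e0 [h1 h2]] := tangent_perturb Pv tx.
have /eqP := v_ext _ h1 h2; rewrite scaler_eq0 gt_eqF //= subr_eq0.
by move/eqP.
Qed.

Lemma extreme_slack_inj v w : extreme hpoly v -> extreme hpoly w ->
  slack v = slack w -> v = w.
Proof.
move=> [Pv v_ext] _ vw.
have tw : tangent v (w - v).
  move=> i vi; have : i \notin slack v by rewrite inE vi eqxx.
  by rewrite vw inE negbK dotpBr vi => /eqP ->; rewrite subrr.
have [e e0 [h1 h2]] := tangent_perturb Pv tw.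
have /eqP := v_ext _ h1 h2; rewrite scaler_eq0 gt_eqF //= subr_eq0.
by move/eqP.
Qed.

Lemma finite_hpoly_vertex : finite_set (vertex hpoly).
Proof.
pose g (S : {set 'I_m}) := xget 0 (fun v => vertex hpoly v /\ slack v = S).
apply: (sub_finite_set (B := g @` setT)); last exact/finite_image/finite_finset.
move=> v hv; exists (slack v) => //.
have [hw hS] := xgetPex 0 (P := fun w => vertex hpoly w /\ slack w = slack v)
  (ex_intro _ v (conj hv erefl)).
exact: extreme_slack_inj (vertex_extreme hw) (vertex_extreme hv) hS.
Qed.

Lemma KP_hpoly_hull :
  exists N (w : 'I_N -> V), (forall i, vertex hpoly (w i)) /\ KP hpoly = hull w.
Proof.
have [X hX] := finite_fsetP.1 finite_hpoly_vertex.
exists (size X), (fun i => nth 0 (X : seq V) i); split.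
  by move=> i; rewrite hX /= mem_nth.
by rewrite /KP hX conv_hull_fsetE.
Qed.

Lemma hull_sub_hpoly N (w : 'I_N -> V) : (forall i, hpoly (w i)) -> hull w `<=` hpoly.
Proof.
move=> Pw x [l [l0 l1 ->]] i; rewrite dotp_sumr.
apply: (le_trans (y := \sum_j l j * b i)); last by rewrite -mulr_suml l1 mul1r.
by apply: ler_sum => j _; rewrite dotpZr ler_wpM2l //; apply: Pw.
Qed.

Lemma KP_hpoly_sub : KP hpoly `<=` hpoly.
Proof.
have [N [w [wv ->]]] := KP_hpoly_hull.
by apply: hull_sub_hpoly => i; have [] := vertex_extreme (wv i).
Qed.

Lemma KP_hpoly_convex x y t : KP hpoly x -> KP hpoly y -> 0 <= t <= 1 ->
  KP hpoly (t *: x + (1 - t) *: y).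
Proof. by have [N [w [_ ->]]] := KP_hpoly_hull; exact: hull_convex. Qed.

Lemma KP_hpoly_bounded :
  exists D, forall x y, KP hpoly x -> KP hpoly y -> enorm (x - y) <= D.
Proof.
have [N [w [_ ->]]] := KP_hpoly_hull; exists (2 * \sum_i enorm (w i)) => x y Kx Ky.
apply: (le_trans (ler_enormD _ _)); rewrite enormN.
by have := hull_enorm_le Kx; have := hull_enorm_le Ky; lra.
Qed.

(* t is the first time at which a constraint that is slack at p becomes tight. *)
Lemma tangent_push p y : hpoly p -> tangent p y -> ~ hcone y ->
  exists2 t, 0 < t & hpoly (p + t *: y) /\ (#|slack (p + t *: y)| < #|slack p|)%N.
Proof.
move=> Pp py /existsNP [j0 /negP]; rewrite -ltNge => yj0.
pose F j := (b j - dotp (a j) p) / dotp (a j) y.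
case: (@arg_minP _ R _ j0 (fun j => 0 < dotp (a j) y) F yj0) => jm yjm F_min.
have pjm : dotp (a jm) p < b jm.
  rewrite lt_neqAle Pp andbT; apply/eqP => pjm.
  by move: yjm; rewrite py // ltxx.
have Fjm_gt0 : 0 < F jm by rewrite divr_gt0 // subr_gt0.
exists (F jm) => //; split.
  move=> i; rewrite dotpDr dotpZr.
  have [yi|yi] := ltP 0 (dotp (a i) y); last by have := Pp i; nra.
  have : F jm * dotp (a i) y <= b i - dotp (a i) p.
    by rewrite -[leRHS](divfK (lt0r_neq0 yi)) ler_wpM2r ?F_min // ltW.
  lra.
apply: proper_card; apply/properP; split.
  apply/fintype.subsetP => i; rewrite !inE; apply: contra => /eqP pi.
  by rewrite dotpDr dotpZr py // mulr0 addr0 pi.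
exists jm; first by rewrite inE lt_eqF.
rewrite inE negbK dotpDr dotpZr /F (divfK (lt0r_neq0 yjm)); apply/eqP; ring.
Qed.

Hypothesis hcone_pointed : forall y, hcone y -> hcone (- y) -> y = 0.

Lemma hpoly_decomp p : hpoly p -> exists2 x, KP hpoly x & hcone (p - x).
Proof.
have [N [w [_ KPw]]] := KP_hpoly_hull; rewrite KPw.
move: {2}#|slack p|.+1 (ltnSn #|slack p|) => k; elim: k p => [//|k IH] p slack_p Pp.
have [p_ext|p_next] := pselect (extreme hpoly p).
  exists p; last by move=> i; rewrite subrr dotp0r.
  rewrite -KPw; exists 1%N, (fun=> 1), (fun=> p).
  by split; rewrite ?big_ord1 ?scale1r // => _; exact: extreme_hpoly_vertex.
have [y [Ppy Pmy y0]] : exists y, [/\ hpoly (p + y), hpoly (p - y) & y <> 0].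
  apply: contrapT => no_y; apply: p_next; split => // y h1 h2.
  by apply: contrapT => y0; apply: no_y; exists y.
have py : tangent p y.
  move=> i pi; have := Ppy i; have := Pmy i; rewrite dotpBr dotpDr pi => h1 h2.
  by apply/eqP; rewrite eq_le; apply/andP; split; lra.
have step u : tangent p u -> ~ hcone u ->
    exists2 t, 0 < t & exists2 x, hull w x & hcone (p + t *: u - x).
  move=> pu Cu; have [t t0 [Pt slack_t]] := tangent_push Pp pu Cu.
  by exists t => //; apply: IH (leq_trans slack_t slack_p) Pt.
wlog Cy : y Ppy Pmy y0 py / ~ hcone y.
  move=> wlog_y; have [Cy|] := pselect (hcone y); last exact: wlog_y.
  apply: (wlog_y (- y)); rewrite ?opprK //.
  - by move/eqP; rewrite oppr_eq0 => /eqP.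
  - exact: tangentN.
  - by move=> Cny; apply: y0; apply: hcone_pointed.
have [t t0 [x Kx Cx]] := step y py Cy.
have [Cny|Cny] := pselect (hcone (- y)).
  exists x => //; rewrite (_ : p - x = (p + t *: y - x) + t *: - y).
    by apply: hconeD => //; apply: hconeZ => //; exact: ltW.
  by rewrite scalerN addrAC addrK.
have [s s0 [x' Kx' Cx']] := step (- y) (tangentN py) Cny.
(* p = l (p + t y) + (1 - l) (p - s y) *)
pose l := s / (s + t).
have l01 : 0 <= l <= 1.
  apply/andP; split; first by apply: divr_ge0; rewrite ?addr_ge0 // ltW.
  by rewrite ler_pdivrMr ?addr_gt0 // mul1r lerDl ltW.
exists (l *: x + (1 - l) *: x'); first exact: hull_convex.
rewrite (_ : p - _ = l *: (p + t *: y - x) + (1 - l) *: (p + s *: - y - x')).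
  by apply: hconeD; apply: hconeZ; rewrite ?subr_ge0; case/andP: l01.
have st0 : s + t != 0 by rewrite gt_eqF ?addr_gt0.
by apply/rowP => i; rewrite !mxE /l; field.
Qed.

End HPolyhedron.

Section Base.
Variables (R : realType) (n : nat).
Local Notation V := ('rV[R]_n).
Implicit Types (P F : set V) (c p u v x y z : V).

Lemma enorm_parallelogram u v :
  enorm (u + v) ^+ 2 + enorm (u - v) ^+ 2 = 2 * (enorm u ^+ 2 + enorm v ^+ 2).
Proof. by rewrite !enorm_sqr dotpBl !dotpBr !dotpDl !dotpDr (dotpC v u); ring. Qed.

Lemma pointed_hcone m (a : 'I_m -> V) b z : hpoly a b z -> pointed (hpoly a b) ->
  forall y, hcone a y -> hcone a (- y) -> y = 0.
Proof.
move=> Pz P_ptd y Cy Cny.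
have : (char_cone (hpoly a b) `&` [set - y | y in char_cone (hpoly a b)]) y.
  split; first exact: hcone_char_cone.
  by exists (- y); [exact: hcone_char_cone | rewrite opprK].
by rewrite P_ptd.
Qed.

Lemma char_cone_sub_polyhedral P F z y : polyhedral P -> F `<=` P -> F z ->
  char_cone F y -> char_cone P y.
Proof.
move=> [m [a [b ->]]] FP Fz Fy; apply: hcone_char_cone => i.
by apply: (char_cone_supp (d := b i)) Fz Fy => x /FP; apply.
Qed.

Lemma base_exists P p : polyhedral P -> pointed P -> P p -> exists x, is_base P p x.
Proof.
move=> [m [a [b ->]]] P_ptd Pp.
have [N [w [_ KPw]]] := KP_hpoly_hull a b.
pose S := hull w `&` [set x | hcone a (p - x)].
have S0 : S !=set0.
  have [x Kx Cx] := hpoly_decomp (pointed_hcone Pp P_ptd) Pp.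
  by exists x; split => //; rewrite -KPw.
have S_compact : compact S.
  apply: compact_closedI; first exact: hull_compact.
  rewrite [X in closed X](_ : _ = hpoly (fun i => - a i) (fun i => - dotp (a i) p)).
    exact: hpoly_closed.
  by apply/seteqP; split => x /= h i; have := h i; rewrite ?dotpBr dotpNl; lra.
have dist_cont : {within S, continuous (fun x => enorm (p - x) : R^o)}.
  exact/continuous_subspaceT/enorm_dist_continuous.
have [x [/set_mem [Kx Cx] x_min]] := EVT_min_rV S0 S_compact dist_cont.
exists x; split; first by rewrite KPw.
  exact: hcone_char_cone.
move=> y Ky Cy; apply: x_min; apply/mem_set; split; first by rewrite -KPw.
exact: char_cone_hcone Pp Cy.
Qed.

(* The midpoint of two base points is feasible, and by the parallelogram law it is
   strictly closer to p unless the two coincide. *)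
Lemma base_unique P p x1 x2 : polyhedral P -> P p ->
  is_base P p x1 -> is_base P p x2 -> x1 = x2.
Proof.
move=> [m [a [b ->]]] Pp [K1 C1 min1] [K2 C2 min2].
pose mid := 2^-1 *: x1 + (1 - 2^-1) *: x2.
have half01 : 0 <= (2^-1 : R) <= 1 by rewrite invr_ge0 ler0n invf_le1 ?ler1n.
have Kmid : KP (hpoly a b) mid by exact: KP_hpoly_convex.
have p_mid : p - mid = 2^-1 *: ((p - x1) + (p - x2)).
  by apply/rowP => i; rewrite !mxE; field.
have Cmid : char_cone (hpoly a b) (p - mid).
  rewrite p_mid; apply: hcone_char_cone; apply: hconeZ => //.
  by apply: hconeD; apply: char_cone_hcone Pp _.
have := min1 _ Kmid Cmid; rewrite p_mid enormZ ger0_norm //.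
set u := p - x1; set v := p - x2 => mid_ge.
have uv : enorm u = enorm v.
  by apply/eqP; rewrite eq_le min1 // min2.
have : enorm (u - v) ^+ 2 <= 0.
  have := enorm_parallelogram u v; rewrite -uv.
  by have := enorm_ge0 u; have := enorm_ge0 (u + v); nra.
move=> uv_sqr; have /enorm_eq0 /eqP : enorm (u - v) = 0.
  by apply/eqP; rewrite -sqrf_eq0 eq_le uv_sqr sqr_ge0.
by rewrite /u /v opprB addrC addrA addrNK subr_eq0 => /eqP.
Qed.

Lemma is_base_base P p : polyhedral P -> pointed P -> P p -> is_base P p (base P p).
Proof. by move=> P_poly P_ptd Pp; apply: xgetPex; exact: base_exists. Qed.

Lemma base_eq P p x : polyhedral P -> P p -> is_base P p x -> base P p = x.
Proof.
move=> P_poly Pp px; apply: (base_unique P_poly Pp) => //.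
by apply: (xgetPex 0 (P := is_base P p)); exists x.
Qed.

Lemma KP_sub P : polyhedral P -> KP P `<=` P.
Proof. by move=> [m [a [b ->]]]; exact: KP_hpoly_sub. Qed.

Lemma polyhedral_convex P x y t : polyhedral P -> P x -> P y -> 0 <= t <= 1 ->
  P (t *: x + (1 - t) *: y).
Proof. by move=> [m [a [b ->]]]; exact: hpoly_convex. Qed.

Lemma base_id P p : polyhedral P -> KP P p -> base P p = p.
Proof.
move=> P_poly Kp; apply: base_eq (KP_sub P_poly Kp) _ => //.
split => //; first by move=> z Pz; rewrite subrr addr0.
by move=> z _ _; rewrite subrr enorm0 enorm_ge0.
Qed.

Lemma vertex_face P F c d v : (forall x, P x -> dotp c x <= d) ->
  F = P `&` [set x | dotp c x = d] -> vertex P v -> dotp c v = d -> vertex F v.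
Proof.
move=> Pcd ->{F} [c' [d' [Pcd' Pv_eq]]] cv.
have Pv : P v by have : [set v] v by []; rewrite Pv_eq; case.
exists c', d'; split; first by move=> x [Px _]; apply: Pcd'.
rewrite Pv_eq; apply/seteqP; split => x /=; last by move=> [[Px _] c'x].
move=> [Px c'x]; have /= xv : [set v] x by rewrite Pv_eq.
by rewrite xv in Px c'x *.
Qed.

Lemma face_vertex P F v : polyhedral P -> face P F -> vertex F v -> vertex P v.
Proof.
move=> [m [a [b ->]]] [c [d [Pcd ->]]] /vertex_extreme [[Pv cv] v_ext].
apply: extreme_hpoly_vertex; split=> // y Pvy Pvy'.
have := Pcd _ Pvy; have := Pcd _ Pvy'; rewrite dotpBr dotpDr cv => h1 h2.
by apply: v_ext; split=> //=; rewrite ?dotpBr ?dotpDr cv; lra.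
Qed.

Lemma KP_face_sub P F : polyhedral P -> face P F -> KP F `<=` KP P.
Proof. by move=> P_poly PF; apply: conv_hull_mono => v; exact: face_vertex. Qed.

(* A convex combination of vertices lies on a supporting hyperplane only
   if every vertex with a positive weight does. *)
Lemma KP_face P F c d x : (forall y, P y -> dotp c y <= d) ->
  F = P `&` [set y | dotp c y = d] -> KP P x -> dotp c x = d -> KP F x.
Proof.
move=> Pcd F_eq [k [l [v [l0 l1 vP ->]]]] cx.
have gap_ge0 j : 0 <= l j * (d - dotp c (v j)).
  by rewrite mulr_ge0 // subr_ge0 Pcd //; have [] := vertex_extreme (vP j).
have gap_sum : \sum_j l j * (d - dotp c (v j)) = 0.
  rewrite (eq_bigr (fun j => l j * d - dotp c (l j *: v j))) => [|j _]; last first.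
    by rewrite dotpZr mulrBr.
  by rewrite sumrB -mulr_suml l1 mul1r -dotp_sumr cx subrr.
have vF j : l j != 0 -> vertex F (v j).
  move=> lj0; apply: vertex_face Pcd F_eq (vP j) _.
  have /eqP : l j * (d - dotp c (v j)) = 0.
    by apply: (psumr_eq0P _ gap_sum) => // i _; exact: gap_ge0.
  by rewrite mulf_eq0 (negPf lj0) subr_eq0 => /eqP.
have [j0 lj0] : exists j, l j != 0.
  apply: contrapT => l0'; move: l1; rewrite big1 => [/esym/eqP|j _].
    by rewrite oner_eq0.
  by apply/eqP; apply: contrapT => lj; apply: l0'; exists j; apply/negP.
exists k, l, (fun j => if l j == 0 then v j0 else v j); split => //.
  by move=> j /=; case: eqP => [_|/eqP]; apply: vF.
by apply: eq_bigr => j _; case: eqP => // ->; rewrite !scale0r.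
Qed.

Lemma face_base P F p :
  polyhedral P -> polyhedral F -> pointed P -> face P F -> F p ->
  base F p = base P p.
Proof.
move=> P_poly F_poly P_ptd PF Fp; have [c [d [Pcd F_eq]]] := PF.
have [Pp cp] : P p /\ dotp c p = d by rewrite F_eq in Fp.
have [Kx Cx x_min] := is_base_base P_poly P_ptd Pp.
set x := base P p in Kx Cx x_min *.
have c_px : dotp c (p - x) <= 0 := char_cone_supp Pcd Pp Cx.
have cx : dotp c x = d.
  apply/eqP; rewrite eq_le Pcd /=; last exact: KP_sub Kx.
  by move: c_px; rewrite dotpBr cp; lra.
apply: (base_eq F_poly Fp); split.
- exact: KP_face Pcd F_eq Kx cx.
- move=> z; rewrite F_eq => -[Pz cz]; split; first exact: Cx.
  by rewrite /= dotpDr dotpBr cz cp cx subrr addr0.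
- move=> y Ky Cy; apply: x_min; first exact: KP_face_sub Ky.
  by apply: char_cone_sub_polyhedral P_poly _ Fp Cy; rewrite F_eq => z [].
Qed.

End Base.

Section BaseContinuity.
Variables (R : realType) (n m : nat) (a : 'I_m -> 'rV[R]_n) (b : 'I_m -> R).
Local Notation V := ('rV[R]_n).
Local Notation P := (hpoly a b).
Implicit Types (p q x y : V).

(* Constraints tight at p0 are preserved by stretching, slack ones have room rho. *)
Lemma hpoly_stretch p0 : P p0 -> exists2 rho : R, 0 < rho &
  forall p (k : R), P p -> 1 <= k -> k * enorm (p - p0) <= rho -> P (p0 + k *: (p - p0)).
Proof.
move=> Pp0.
have slack_gt0 j : dotp (a j) p0 != b j -> 0 < b j - dotp (a j) p0.
  by move=> pj; rewrite subr_gt0 lt_neqAle pj Pp0.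
have [s s0 le_s] := pos_lbound_fin slack_gt0.
pose L := \sum_j enorm (a j) + 1.
have L0 : 0 < L by rewrite ltr_pwDr // sumr_ge0 // => j _; exact: enorm_ge0.
have le_L j : enorm (a j) <= L.
  rewrite /L (bigD1 j) //= -addrA lerDl addr_ge0 //.
  by apply: sumr_ge0 => i _; exact: enorm_ge0.
exists (s / L) => [|p k Pp k1 k_rho j]; first exact: divr_gt0.
have k0 : 0 <= k by apply: le_trans k1.
rewrite dotpDr dotpZr.
have [pj|pj] := eqVneq (dotp (a j) p0) (b j).
  have : dotp (a j) (p - p0) <= 0 by rewrite dotpBr pj; have := Pp j; lra.
  by rewrite pj; nra.
have : k * dotp (a j) (p - p0) <= s.
  apply: (le_trans (ler_wpM2l k0 (ler_dotp _ _))).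
  rewrite mulrCA; apply: (le_trans (ler_wpM2r _ (le_L j))).
    by rewrite mulr_ge0 ?enorm_ge0.
  by rewrite mulrC -ler_pdivlMr.
by have := le_s j pj; lra.
Qed.

Hypothesis P_pointed : pointed P.

(* Witness: the same convex combination of base p0 and of a decomposition point of q. *)
Lemma base_dist_le_segment p0 q t D : P p0 -> P q -> 0 <= t <= 1 ->
  (forall x y, KP P x -> KP P y -> enorm (x - y) <= D) ->
  enorm (p0 + t *: (q - p0) - base P (p0 + t *: (q - p0))) <=
    enorm (p0 - base P p0) + t * (enorm (q - p0) + D).
Proof.
move=> Pp0 Pq t01 KP_D; have P_poly := hpoly_polyhedral a b.
have Pp : P (p0 + t *: (q - p0)).
  rewrite (_ : _ + _ = t *: q + (1 - t) *: p0); first exact: hpoly_convex.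
  by apply/rowP => i; rewrite !mxE; ring.
have [Kx0 Cx0 _] := is_base_base P_poly P_pointed Pp0.
have [yq Kyq Cyq] := hpoly_decomp (pointed_hcone Pp0 P_pointed) Pq.
have [_ _ base_min] := is_base_base P_poly P_pointed Pp.
pose y := t *: yq + (1 - t) *: base P p0.
have [t0 t1] : 0 <= t /\ 0 <= 1 - t by case/andP: t01; rewrite subr_ge0.
apply: (le_trans (base_min y _ _)).
- exact: KP_hpoly_convex.
- rewrite (_ : _ - y = t *: (q - yq) + (1 - t) *: (p0 - base P p0)); last first.
    by apply/rowP => i; rewrite !mxE; ring.
  apply: hcone_char_cone; apply: hconeD; apply: hconeZ => //.
  exact: char_cone_hcone Pp0 Cx0.
rewrite (_ : _ - y = (p0 - base P p0) + t *: ((q - p0) + (base P p0 - yq))); last first.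
  by apply/rowP => i; rewrite !mxE; ring.
apply: (le_trans (ler_enormD _ _)); rewrite lerD2l enormZ ger0_norm //.
by apply: ler_wpM2l => //; apply: (le_trans (ler_enormD _ _)); rewrite lerD2l KP_D.
Qed.

Lemma base_dist_le p0 : P p0 -> exists2 rho : R, 0 < rho & exists2 C : R, 0 <= C &
  forall p, P p -> enorm (p - p0) <= rho ->
    enorm (p - base P p) <= enorm (p0 - base P p0) + C * enorm (p - p0).
Proof.
move=> Pp0; have [rho rho0 stretch] := hpoly_stretch Pp0.
have [D KP_D] := KP_hpoly_bounded a b.
have D0 : 0 <= D.
  have [x0 Kx0 _] := hpoly_decomp (pointed_hcone Pp0 P_pointed) Pp0.
  by have := KP_D _ _ Kx0 Kx0; rewrite subrr enorm0.
exists rho => //; exists (1 + D / rho) => [|p Pp p_rho].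
  by rewrite addr_ge0 ?divr_ge0 // ltW.
have [->|pp0] := eqVneq p p0; first by rewrite subrr enorm0 mulr0 addr0.
have r0 : 0 < enorm (p - p0).
  rewrite lt_def enorm_ge0 andbT; apply: contra_neq pp0 => /enorm_eq0 /eqP.
  by rewrite subr_eq0 => /eqP.
pose t := enorm (p - p0) / rho.
have t0 : 0 < t by rewrite divr_gt0.
have t01 : 0 <= t <= 1 by rewrite ltW //= ler_pdivrMr // mul1r.
pose q := p0 + t^-1 *: (p - p0).
have Pq : P q.
  apply: stretch => //; first by rewrite invf_ge1 //; case/andP: t01.
  by rewrite /t invf_div divfK ?gt_eqF.
have p_eq : p = p0 + t *: (q - p0).
  by apply/rowP => i; rewrite !mxE; field; rewrite gt_eqF.
have q_p0 : enorm (q - p0) = rho.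
  by rewrite /q addrC addKr enormZ ger0_norm ?invr_ge0 ?ltW // /t invf_div divfK ?gt_eqF.
have := base_dist_le_segment Pp0 Pq t01 KP_D; rewrite -p_eq q_p0.
rewrite (_ : t * (rho + D) = (1 + D / rho) * enorm (p - p0)) //.
by rewrite /t; field; rewrite gt_eqF.
Qed.


(* K_P is closed, and the cone condition and the distance bound of base_dist_le pass to
   the limit, so a cluster point is itself a base point of p0. *)
Lemma cluster_base p0 x :
  P p0 -> cluster (base P @ within P (nbhs p0)) x -> x = base P p0.
Proof.
move=> Pp0 x_cl; have P_poly := hpoly_polyhedral a b.
have [N [w [_ KPw]]] := KP_hpoly_hull a b.
have [_ _ base_min] := is_base_base P_poly P_pointed Pp0.
have [rho rho0 [C C0 dist_le]] := base_dist_le Pp0.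
have near_base E : closed E -> (\forall p \near within P (nbhs p0), E (base P p)) -> E x.
  by move=> /closure_id E_cl E_near; move: x_cl; rewrite clusterE E_cl; apply.
have near_p0 d : 0 < d -> _ := @near_within_enorm_le R n P p0 d.
have Kx : hull w x.
  apply: near_base.
    by apply: compact_closed; [exact: norm_hausdorff | exact: hull_compact].
  apply: filterS (near_p0 _ ltr01) => p [Pp _]; rewrite -KPw.
  by have [] := is_base_base P_poly P_pointed Pp.
have Cx : hcone a (p0 - x).
  move=> i; apply: (@ler_addgt0_mulr _ _ 0 (enorm (a i))) => [|d d0].
    exact: enorm_ge0.
  pose E := [set y | dotp (- a i) y <= enorm (a i) * d - dotp (a i) p0].
  suff : E x by rewrite /E /= dotpBr dotpNl; lra.
  apply: near_base; first exact: closed_halfspace.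
  apply: filterS (near_p0 _ d0) => p [Pp pd]; rewrite /E /= dotpNl.
  have [_ Cp _] := is_base_base P_poly P_pointed Pp.
  have := char_cone_hcone Pp Cp i; have := ler_dotp (a i) (p0 - p).
  have := ler_wpM2l (enorm_ge0 (a i)) pd; rewrite enorm_distC !dotpBr; lra.
have x_le : enorm (p0 - x) <= enorm (p0 - base P p0).
  apply: (@ler_addgt0_mulr _ _ _ (1 + C)) => [|d d0]; first by rewrite addr_ge0.
  pose E := [set y | enorm (p0 - y) <= enorm (p0 - base P p0) + (1 + C) * d].
  apply: (near_base E).
    exact: (continuous_closedP _).1 (@enorm_dist_continuous R n p0) _ (@closed_le R _).
  have d_rho : 0 < Num.min d rho by rewrite lt_min d0 rho0.
  apply: filterS (near_p0 _ d_rho) => p [Pp]; rewrite le_min => /andP [pd p_rho].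
  rewrite /E /=; have := dist_le p Pp p_rho; have := ler_enorm_distD p0 p (base P p).
  by have := ler_wpM2l C0 pd; rewrite (enorm_distC p0 p); lra.
apply/esym/(base_eq P_poly Pp0); split; first by rewrite KPw.
  exact: hcone_char_cone.
by move=> y Ky Cy; apply: le_trans x_le (base_min _ Ky Cy).
Qed.

Lemma base_continuous : {within P, continuous (base P)}.
Proof.
apply/subspace_continuousP => p0 Pp0.
have [N [w [_ KPw]]] := KP_hpoly_hull a b.
have PF : ProperFilter (within P (nbhs p0)).
  by apply: within_nbhs_proper; exact: subset_closure.
pose K := hull w `|` closed_ball (base P p0) 1.
have K_compact : compact K.
  apply: compactU; first exact: hull_compact.
  apply: bounded_closed_compact; last exact: closed_ball_closed.
  rewrite /= /bounded_near; near=> M => y /=; rewrite closed_ballE //= => y_near.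
  apply: (le_trans (y := `|base P p0| + 1)).
    have := ler_normB (base P p0) (base P p0 - y); rewrite opprB addrC subrK.
    by move: y_near; rewrite /closed_ball_ /=; lra.
  by near: M; apply: nbhs_pinfty_ge; rewrite num_real.
have K_near : (base P @ within P (nbhs p0)) K.
  apply: nearW => p Pp; left; rewrite -KPw.
  by have [] := is_base_base (hpoly_polyhedral a b) P_pointed Pp.
apply: (@compact_cluster_set1 _ (base P p0) _ K) => //.
  apply: (@filterS _ _ _ (closed_ball (base P p0) 1)); first by move=> y; right.
  by apply: (filterS (@subset_closed_ball _ _ _ _)); exact: nbhsx_ballx.
apply/seteqP; split => [x|_ ->]; first exact: cluster_base.
have [x [_ x_cl]] := K_compact _ _ K_near.
by rewrite -(cluster_base Pp0 x_cl).
Unshelve. all: end_near.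
Qed.

End BaseContinuity.

Lemma bigsetU_continuous (T U : topologicalType) (s : seq (set T)) (f : T -> U) :
  (forall A, A \in s -> closed A /\ {within A, continuous f}) ->
  {within \big[setU/set0]_(A <- s) A, continuous f}.
Proof.
elim: s => [|A s IH] sf; first by rewrite big_nil; exact: continuous_subspace0.
have sf' B : B \in s -> closed B /\ {within B, continuous f}.
  by move=> Bs; apply: sf; rewrite in_cons Bs orbT.
have [A_closed fA] := sf A (mem_head _ _); rewrite big_cons.
apply: withinU_continuous => //; last exact: IH.
by apply: closed_bigsetU => B /sf' [].
Qed.

Lemma within_fst_continuous (T U W : topologicalType) (X : set T) (Y : set U)
    (g : T -> W) :
  {within X, continuous g} -> {within X `*` Y, continuous (fun q => g q.1)}.
Proof.
move=> /subspace_continuousP g_cont; apply/subspace_continuousP => q0 [Xq0 _] B gB.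
have fst_cvg : fst @ within (X `*` Y) (nbhs q0) --> q0.1.
  by apply: cvg_trans (cvg_fmap2 (cvg_within _)) _; exact: cvg_fst.
have := fst_cvg _ (g_cont _ Xq0 B gB).
change (nbhs q0 (fun q => (X `*` Y) q -> X q.1 -> B (g q.1)) ->
        nbhs q0 (fun q => (X `*` Y) q -> B (g q.1))).
by apply: filterS => q gq XYq; exact: gq XYq XYq.1.
Qed.

Lemma homotopy_continuous (R : realType) (V : normedModType R) (X : set V)
    (g : V -> V) :
  {within X, continuous g} ->
  {within X `*` `[0%R, 1%R],
    continuous (fun q : V * R => q.2 *: g q.1 + (1 - q.2) *: q.1)}.
Proof.
move=> g_cont.
have g1_cont := (subspace_continuousP _ _).1
  (within_fst_continuous (U := R) (Y := `[0%R, 1%R]) g_cont).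
have id1_cont := (subspace_continuousP _ _).1
  (within_fst_continuous (U := R) (Y := `[0%R, 1%R])
    (continuous_subspaceT (f := @id V) (fun=> cvg_id))).
apply/subspace_continuousP => q0 Xq0.
have snd_cvg : snd @ within (X `*` `[0%R, 1%R]) (nbhs q0) --> q0.2.
  by apply: cvg_trans (cvg_fmap2 (cvg_within _)) _; exact: cvg_snd.
apply: cvgD; apply: cvgZ.
- exact: snd_cvg.
- exact: g1_cont.
- by apply: cvgB; [exact: cvg_cst | exact: snd_cvg].
- exact: id1_cont.
Qed.

Section Complex.
Variables (R : realType) (n : nat) (C : set (set 'rV[R]_n)).
Local Notation V := ('rV[R]_n).
Hypotheses (C_cplx : polyhedral_complex C)
  (C_pointed : forall P, C P -> P !=set0 -> pointed P).
Implicit Types (P : set V) (p : V).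

Let C_poly P : C P -> polyhedral P.
Proof. by case: C_cplx => _ + _ _; apply. Qed.

Let cell_pointed P p : C P -> P p -> pointed P.
Proof. by move=> CP Pp; apply: C_pointed => //; exists p. Qed.

Lemma base_cells P1 P2 p : C P1 -> C P2 -> P1 p -> P2 p -> base P1 p = base P2 p.
Proof.
move=> CP1 CP2 P1p P2p; case: C_cplx => _ _ C_face C_meet.
have [face1 face2] := C_meet P1 P2 CP1 CP2.
have C12 := C_poly (C_face _ _ CP1 face1).
rewrite -(face_base (C_poly CP1) C12 (cell_pointed CP1 P1p) face1) //.
exact: face_base (C_poly CP2) C12 (cell_pointed CP2 P2p) face2 _.
Qed.

Lemma baseC_base P p : C P -> P p -> baseC C p = base P p.
Proof.
move=> CP Pp; rewrite /baseC.
have : exists x, exists Q, C Q /\ Q p /\ x = base Q p by exists (base P p), P.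
by move=> /(xgetPex 0) [Q [CQ [Qp ->]]]; exact: base_cells.
Qed.

Lemma baseC_com_part p : cplx_support C p -> cplx_support (com_part C) (baseC C p).
Proof.
move=> [P CP Pp]; exists (KP P).
  exists P => //; exists 0, 0; split; first by move=> x _; rewrite dotp0l.
  by apply/seteqP; split => x /=; [split => //; rewrite dotp0l | case].
rewrite (baseC_base CP Pp).
by have [] := is_base_base (C_poly CP) (cell_pointed CP Pp) Pp.
Qed.

Lemma com_part_sub : cplx_support (com_part C) `<=` cplx_support C.
Proof.
move=> y [F [P CP [c [d [_ ->]]]] [Ky _]]; exists P => //.
exact: KP_sub (C_poly CP) _ Ky.
Qed.

Lemma baseC_id p : cplx_support (com_part C) p -> baseC C p = p.
Proof.
move=> [F [P CP [c [d [_ ->]]]] [Kp _]].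
by rewrite (baseC_base CP (KP_sub (C_poly CP) Kp)) base_id //; exact: C_poly.
Qed.

Lemma baseC_continuous : {within cplx_support C, continuous (baseC C)}.
Proof.
have [X C_X] := finite_fsetP.1 (let: And4 C_fin _ _ _ := C_cplx in C_fin).
rewrite [cplx_support C](_ : _ = \big[setU/set0]_(P <- X) P); last first.
  by rewrite -bigcup_fset -C_X.
apply: bigsetU_continuous => P PX; have CP : C P by rewrite C_X.
have [m [a [b P_eq]]] := C_poly CP; split; first by rewrite P_eq; exact: hpoly_closed.
have [[p Pp]|P0] := pselect (P !=set0); last first.
  rewrite (_ : P = set0); first exact: continuous_subspace0.
  by apply/seteqP; split => x // Px; apply: P0; exists x.
apply: (@subspace_eq_continuous _ P _ (base P)).
  by move=> x /set_mem Px; rewrite /from_subspace (baseC_base CP Px).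
have P_ptd := cell_pointed CP Pp; rewrite P_eq in P_ptd *.
exact: base_continuous.
Qed.

Lemma baseC_deformation_retraction :
  strong_deformation_retraction (cplx_support C) (cplx_support (com_part C))
    (fun q : V * R => q.2 *: baseC C q.1 + (1 - q.2) *: q.1).
Proof.
split; first exact: com_part_sub.
split => /=.
- move=> p t [P CP Pp] t01; exists P => //; rewrite (baseC_base CP Pp).
  have [Kb _ _] := is_base_base (C_poly CP) (cell_pointed CP Pp) Pp.
  exact: polyhedral_convex (C_poly CP) (KP_sub (C_poly CP) Kb) Pp t01.
- exact: homotopy_continuous baseC_continuous.
- by move=> p _; rewrite scale0r add0r subr0 scale1r.
- by move=> p Xp; rewrite scale1r subrr scale0r addr0; exact: baseC_com_part.
- by move=> p t Ap _; rewrite baseC_id // -scalerDl addrC subrK scale1r.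
Qed.

End Complex.

Theorem mainTheorem12 (R : realType) (n : nat) (C : set (set 'rV[R]_n)) :
  polyhedral_complex C ->
  (forall P, C P -> P !=set0 -> pointed P) ->
  (forall P p, C P -> P p -> exists! x, is_base P p x) /\
  [/\ (forall P1 P2 p, C P1 -> C P2 -> P1 p -> P2 p -> base P1 p = base P2 p),
      (forall P p, C P -> P p -> baseC C p = base P p),
      (forall p, cplx_support C p -> cplx_support (com_part C) (baseC C p)),
      {within cplx_support C, continuous (baseC C)} &
      strong_deformation_retraction (cplx_support C) (cplx_support (com_part C))
        (fun q : 'rV[R]_n * R => q.2 *: baseC C q.1 + (1 - q.2) *: q.1)].
Proof.
move=> C_cplx C_pointed; split.
  move=> P p CP Pp; have P_poly : polyhedral P by case: C_cplx => _ + _ _; apply.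
  have [x px] := base_exists P_poly (C_pointed _ CP (ex_intro _ p Pp)) Pp.
  by exists x; split => // y; exact: base_unique.
split.
- exact: base_cells.
- exact: baseC_base.
- exact: baseC_com_part.
- exact: baseC_continuous.
- exact: baseC_deformation_retraction.
Qed.
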